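(* Let $(\mathcal A,\mathcal T,(-))$ be a meta-tangible $\mathcal T$-triple and let $a_1\neq a_2$ be elements of $\mathcal T$ with $a_1+a_2=a_2$. Then $a_1(-)a_2=(-)a_2$, equivalently $a_2(-)a_1=a_2$.
   Context: $(\mathcal A,+,\mathbb 0)$ commutative monoid, $\mathcal T\subseteq\mathcal A\setminus\{\mathbb 0\}$. A negation map is $(-):\mathcal A\to\mathcal A$ with $(-)(b_1+b_2)=(-)b_1+(-)b_2$, $(-)((-)b)=b$, $(-)\mathbb 0=\mathbb 0$, $(-)\mathcal T\subseteq\mathcal T$. Write $b(-)c:=b+((-)c)$, $b^\circ:=b(-)b$, $\mathcal A^\circ=\{b^\circ:b\in\mathcal A\}$. A $\mathcal T$-triple $(\mathcal A,\mathcal T,(-))$: such data with an action $\mathcal T\times\mathcal A\to\mathcal A$ satisfying $a(b_1+b_2)=ab_1+ab_2$, $a\mathbb 0=\mathbb 0$, $(-)(ab)=((-)a)b=a((-)b)$, with $\mathcal T\cap\mathcal A^\circ=\emptyset$ and every element of $\mathcal A$ a finite sum of elements of $\mathcal T$. The triple is meta-tangible if $a+b\in\mathcal T$ for all $a,b\in\mathcal T$ with $b\neq(-)a$. *)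

From Stdlib Require Import List.
Import ListNotations.

Record TTriple := {
  carrier :> Type;
  add : carrier -> carrier -> carrier;
  zero : carrier;
  tang : carrier -> Prop;
  neg : carrier -> carrier;
  act : carrier -> carrier -> carrier;
  add_assoc : forall x y z, add x (add y z) = add (add x y) z;
  add_comm : forall x y, add x y = add y x;
  add_zero : forall x, add x zero = x;
  tang_nz : forall a, tang a -> a <> zero;
  neg_add : forall b1 b2, neg (add b1 b2) = add (neg b1) (neg b2);
  neg_neg : forall b, neg (neg b) = b;
  neg_zero : neg zero = zero;
  neg_tang : forall a, tang a -> tang (neg a);
  act_add : forall a b1 b2, tang a -> act a (add b1 b2) = add (act a b1) (act a b2);
  act_zero : forall a, tang a -> act a zero = zero;
  act_neg_l : forall a b, tang a -> neg (act a b) = act (neg a) b;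
  act_neg_r : forall a b, tang a -> neg (act a b) = act a (neg b);
  (* T ∩ A° = ∅, where b° = b (-) b = b + (-)b *)
  tang_not_circ : forall a b, tang a -> a <> add b (neg b);
  tang_gen : forall b, exists l : list carrier,
      Forall tang l /\ b = fold_right add zero l
}.

Arguments add {_}. Arguments zero {_}. Arguments tang {_}.
Arguments neg {_}. Arguments act {_}.

Definition sub {X : TTriple} (b c : X) : X := add b (neg c).

Definition meta_tangible (X : TTriple) : Prop :=
  forall a b : X, tang a -> tang b -> b <> neg a -> tang (add a b).

(* Since a1 <> a2, meta-tangibility puts c := a1 (-) a2 in T, and
   a1 + a2 = a2 makes c + a2 = a2 (-) a2 lie in A°.  As T and A° are
   disjoint, c + a2 cannot be tangible, so meta-tangibility forces a2 = (-)c,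
   i.e. c = (-)a2.  Negating gives a2 (-) a1 = a2. *)
From Stdlib Require Import Classical.

Section MetaTangible.

Variable X : TTriple.

Lemma neg_inj (b c : X) : neg b = neg c -> b = c.
Proof. intro E. rewrite <- (neg_neg X b), E, neg_neg. reflexivity. Qed.

Lemma neg_sub (b c : X) : neg (sub b c) = sub c b.
Proof. unfold sub. rewrite neg_add, neg_neg, add_comm. reflexivity. Qed.

Lemma sub_add_absorb (a1 a2 : X) : add a1 a2 = a2 -> add (sub a1 a2) a2 = sub a2 a2.
Proof.
  intro Hsum. unfold sub.
  rewrite <- add_assoc, (add_comm X (neg a2) a2), add_assoc, Hsum. reflexivity.
Qed.

Hypothesis HX : meta_tangible X.

Lemma tang_sub (a b : X) : tang a -> tang b -> a <> b -> tang (sub a b).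
Proof.
  intros Ha Hb Hne. apply HX; [exact Ha | now apply neg_tang |].
  intro E. apply Hne, neg_inj. now symmetry.
Qed.

Lemma add_circ_tang_eq_neg (c b : X) :
  tang c -> tang b -> add c b = sub b b -> b = neg c.
Proof.
  intros Hc Hb E. apply NNPP. intro Hnb.
  exact (tang_not_circ X _ b (HX c b Hc Hb Hnb) E).
Qed.

End MetaTangible.

Theorem lemma7p11 (X : TTriple) (HX : meta_tangible X) (a1 a2 : X)
  (H1 : tang a1) (H2 : tang a2) (Hne : a1 <> a2) (Hsum : add a1 a2 = a2) :
  sub a1 a2 = neg a2 /\ sub a2 a1 = a2.
Proof.
  assert (Hc : tang (sub a1 a2)) by exact (tang_sub X HX a1 a2 H1 H2 Hne).
  assert (E : a2 = neg (sub a1 a2))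
    by exact (add_circ_tang_eq_neg X HX _ _ Hc H2 (sub_add_absorb X a1 a2 Hsum)).
  split.
  - rewrite E at 2. rewrite neg_neg. reflexivity.
  - now rewrite <- neg_sub, <- E.
Qed.
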